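(* Let $\mathcal{M}$ be a finite $\mathcal{R}$-trivial monoid with generating set $\mathcal{S}$, let $R$ be a ring with $1\neq 0$, and let $\sigma\in\mathcal{M}$. Let $$T_{[\sigma]}:=\prod_{\tau\in\mathcal{L}^{\mathcal{S}}_\sigma} U_\tau\prod_{\kappa\in\mathcal{S}\setminus\mathcal{L}^{\mathcal{S}}_\sigma}(\mathrm{Id}-U_\kappa)\in\mathrm{Mat}(R,n),$$ with the factors multiplied in any order. Then for every $\mu\in\mathcal{M}$, $(T_{[\sigma]})_{\mu,\mu}=1$ if $\mu\sim\sigma$ and $(T_{[\sigma]})_{\mu,\mu}=0$ otherwise; this holds independently of the order of the factors.
   Context: $\mathcal{M}$ is $\mathcal{R}$-trivial: $\sigma\mathcal{M}=\tau\mathcal{M}$ implies $\sigma=\tau$; $n=\#\mathcal{M}$, and its elements are ordered so that $\#\sigma_1\mathcal{M}\ge\dots\ge\#\sigma_n\mathcal{M}$, with matrix entries indexed by elements of $\mathcal{M}$. $U_\sigma$ is the matrix with $(U_\sigma)_{\tau,\kappa}=1$ if $\tau\sigma=\kappa$ and $0$ otherwise. $\mathcal{L}_\sigma:=\{\tau\in\mathcal{M}:\sigma\tau=\sigma\}$, $\mathcal{L}^{\mathcal{S}}_\sigma:=\mathcal{L}_\sigma\cap\mathcal{S}$, and $\mu\sim\sigma$ (same loop-type) iff $\mathcal{L}_\mu=\mathcal{L}_\sigma$. *)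

From HB Require Import structures.
From mathcomp Require Import all_boot all_order all_algebra.
Set Implicit Arguments. Unset Strict Implicit. Unset Printing Implicit Defensive.
Import GRing.Theory.
Local Open Scope ring_scope.

Definition is_monoid (T : finType) (mul : T -> T -> T) (one : T) : Prop :=
  associative mul /\ left_id one mul /\ right_id one mul.

Definition rideal (T : finType) (mul : T -> T -> T) (s : T) : {set T} :=
  [set mul s m | m : T].

Definition R_trivial (T : finType) (mul : T -> T -> T) : Prop :=
  forall s t : T, rideal mul s = rideal mul t -> s = t.

Definition generates (T : finType) (mul : T -> T -> T) (one : T) (S : {set T}) : Prop :=
  forall x : T, exists w : seq T, all (fun y => y \in S) w /\ x = foldr mul one w.

Definition loopset (T : finType) (mul : T -> T -> T) (s : T) : {set T} :=
  [set t | mul s t == s].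

Definition Umx (R : nzRingType) (T : finType) (mul : T -> T -> T)
    (e : 'I_#|T| -> T) (s : T) : 'M[R]_#|T| :=
  \matrix_(i, j) (mul (e i) s == e j)%:R.

(* T_[sigma] with factors taken in the order given by the sequence w *)
Definition Tsigma (R : nzRingType) (T : finType) (mul : T -> T -> T)
    (e : 'I_#|T| -> T) (S : {set T}) (s : T) (w : seq T) : 'M[R]_#|T| :=
  \big[mulmx/1%:M]_(k <- w)
     (if k \in loopset mul s :&: S then Umx R mul e k else 1%:M - Umx R mul e k).

From HB Require Import structures.
From mathcomp Require Import all_boot all_order all_algebra.
Import GRing.Theory.
Set Implicit Arguments. Unset Strict Implicit.
Local Open Scope ring_scope.

(* Order M so that #(sigma_1 M) >= ... >= #(sigma_n M).  If
   (U_kappa)_{tau,rho} <> 0 then rho = tau kappa, hence rho M is contained in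
   tau M; if moreover rho comes strictly before tau, the cardinalities force
   rho M = tau M, hence rho = tau by R-triviality, a contradiction.  So every
   U_kappa, and hence every factor U_kappa or Id - U_kappa of T_[sigma], is
   upper triangular, and the diagonal of a product of upper triangular
   matrices is the product of the diagonals.  Since (U_kappa)_{mu,mu} is 1 or
   0 according as kappa is in L_mu or not, (T_[sigma])_{mu,mu} is 1 exactly
   when L_mu and L_sigma contain the same generators.  Finally, in an
   R-trivial monoid mu (a b) = mu forces mu a = mu and mu b = mu, so L_mu is
   the set of products of generators lying in L_mu: L_mu is determined by
   L_mu /\ S, which gives the claim (for any order of the factors). *)

Section UpperTriangular.
Variables (R : nzRingType) (n : nat).

Definition upper_triangular (A : 'M[R]_n) : Prop :=
  forall i j : 'I_n, (j < i)%N -> A i j = 0.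

Lemma upper_triangular_scalar (a : R) : upper_triangular a%:M.
Proof. by move=> i j ji; rewrite mxE -val_eqE (gtn_eqF ji). Qed.

Lemma upper_triangularD (A B : 'M[R]_n) :
  upper_triangular A -> upper_triangular B -> upper_triangular (A - B).
Proof. by move=> uA uB i j ji; rewrite !mxE uA // uB // subr0. Qed.

Lemma upper_triangularM (A B : 'M[R]_n) :
  upper_triangular A -> upper_triangular B -> upper_triangular (A *m B).
Proof.
move=> uA uB i j ji; rewrite mxE big1 // => k _.
have [ki | ik] := ltnP k i; first by rewrite uA // mul0r.
by rewrite uB ?mulr0 // (leq_trans ji ik).
Qed.

Lemma diag_mulmx_upper (A B : 'M[R]_n) (i : 'I_n) :
  upper_triangular A -> upper_triangular B -> (A *m B) i i = A i i * B i i.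
Proof.
move=> uA uB; rewrite mxE (bigD1 i) //= big1 ?addr0 // => k /negPf ki.
have [lt_ki | lt_ik | /val_inj eq_ki] := ltngtP k i.
- by rewrite uA // mul0r.
- by rewrite uB // mulr0.
- by rewrite eq_ki eqxx in ki.
Qed.

Lemma upper_triangular_big (I : Type) (r : seq I) (F : I -> 'M[R]_n) :
  (forall k, upper_triangular (F k)) ->
  upper_triangular (\big[mulmx/1%:M]_(k <- r) F k).
Proof.
move=> uF; apply: big_ind => //; first exact: upper_triangular_scalar.
exact: upper_triangularM.
Qed.

Lemma diag_big_upper (I : Type) (r : seq I) (F : I -> 'M[R]_n) (i : 'I_n) :
  (forall k, upper_triangular (F k)) ->
  (\big[mulmx/1%:M]_(k <- r) F k) i i = \prod_(k <- r) F k i i.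
Proof.
move=> uF; elim: r => [|k r IHr]; first by rewrite !big_nil mxE eqxx.
by rewrite !big_cons diag_mulmx_upper ?IHr //; apply: upper_triangular_big.
Qed.

End UpperTriangular.

Lemma prod_natr_bool (R : nzRingType) (I : Type) (r : seq I) (P : pred I) :
  \prod_(k <- r) (P k)%:R = (all P r)%:R :> R.
Proof.
elim: r => [|k r IHr]; first by rewrite big_nil.
by rewrite big_cons IHr /=; case: (P k); rewrite ?mul1r ?mul0r.
Qed.

Section RTrivialMonoid.
Variables (T : finType) (mul : T -> T -> T) (one : T).
Hypothesis monoidT : is_monoid mul one.
Hypothesis RtrivT : R_trivial mul.

Lemma rideal_mulr (s t : T) : rideal mul (mul s t) \subset rideal mul s.
Proof.
have [mulA _] := monoidT.
by apply/subsetP => _ /imsetP[m _ ->]; rewrite -mulA; apply: imset_f.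
Qed.

Lemma loop_mulr (m a b : T) :
  mul m (mul a b) = m -> mul m a = m /\ mul m b = m.
Proof.
have [mulA _] := monoidT; move=> loop_ab.
have loop_a : mul m a = m.
  apply: RtrivT; apply/eqP; rewrite eqEsubset rideal_mulr /=.
  by rewrite -[X in rideal mul X]loop_ab mulA rideal_mulr.
by split=> //; rewrite -[RHS]loop_ab mulA loop_a.
Qed.

Lemma loopset_word (m : T) (ws : seq T) :
  (foldr mul one ws \in loopset mul m) = all (mem (loopset mul m)) ws.
Proof.
have [mulA [_ mul1]] := monoidT.
elim: ws => [|a ws IHws] /=; first by rewrite inE mul1 eqxx.
rewrite -IHws !inE; apply/eqP/andP => [/loop_mulr[-> ->] // | [/eqP ma /eqP]].
by rewrite mulA ma.
Qed.

Lemma loopset_generators (S : {set T}) (m m' : T) :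
  generates mul one S ->
  loopset mul m :&: S = loopset mul m' :&: S -> loopset mul m = loopset mul m'.
Proof.
move=> genS eqS; apply/setP => x; have [ws [wsS ->]] := genS x.
rewrite !loopset_word; apply: eq_in_all => y y_ws.
have yS : y \in S by apply: (allP wsS).
by rewrite /= -[LHS]andbT -[RHS]andbT -yS -!in_setI eqS.
Qed.

End RTrivialMonoid.

Section TransitionMatrices.
Variables (T : finType) (mul : T -> T -> T) (one : T) (R : nzRingType).
Variable e : 'I_#|T| -> T.
Hypothesis monoidT : is_monoid mul one.
Hypothesis RtrivT : R_trivial mul.
Hypothesis inj_e : injective e.
Hypothesis sorted_e :
  forall i j : 'I_#|T|, (i <= j)%N -> (#|rideal mul (e j)| <= #|rideal mul (e i)|)%N.

Lemma Umx_upper (k : T) : upper_triangular (Umx R mul e k).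
Proof.
move=> i j ji; rewrite mxE; case: eqP => //= eik; exfalso.
have sub_ji : rideal mul (e j) \subset rideal mul (e i).
  by rewrite -eik (rideal_mulr monoidT).
have eq_ji : rideal mul (e j) = rideal mul (e i).
  by apply/eqP; rewrite eqEcard sub_ji sorted_e // ltnW.
by rewrite (inj_e (RtrivT eq_ji)) ltnn in ji.
Qed.

Lemma Umx_diag (k : T) (i : 'I_#|T|) :
  Umx R mul e k i i = (k \in loopset mul (e i))%:R.
Proof. by rewrite mxE inE. Qed.

Lemma Tsigma_factor_upper (P : bool) (k : T) :
  upper_triangular (if P then Umx R mul e k else 1%:M - Umx R mul e k).
Proof.
case: P; first exact: Umx_upper.
by apply: upper_triangularD; [apply: upper_triangular_scalar | apply: Umx_upper].
Qed.

Lemma Tsigma_factor_diag (P : bool) (k : T) (i : 'I_#|T|) :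
  (if P then Umx R mul e k else 1%:M - Umx R mul e k) i i =
    (P == (k \in loopset mul (e i)))%:R.
Proof.
case: P; first by rewrite Umx_diag eq_sym eqb_id.
by rewrite !mxE eqxx inE; case: eqP; rewrite ?subrr ?subr0.
Qed.

End TransitionMatrices.

Theorem mainTheorem7 (T : finType) (mul : T -> T -> T) (one : T)
    (S : {set T}) (R : nzRingType) (sigma : T)
    (e : 'I_#|T| -> T) (w : seq T) :
  is_monoid mul one ->
  R_trivial mul ->
  generates mul one S ->
  bijective e ->
  (forall i j : 'I_#|T|, (i <= j)%N -> #|rideal mul (e j)| <= #|rideal mul (e i)|)%N ->
  perm_eq w (enum S) ->
  forall i : 'I_#|T|,
    Tsigma R mul e S sigma w i i =
      (if loopset mul (e i) == loopset mul sigma then 1 else 0).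
Proof.
move=> monoidT RtrivT genS /bij_inj inj_e sorted_e perm_w i.
set inL := fun k => (k \in loopset mul sigma :&: S) == (k \in loopset mul (e i)).
have diag_prod : Tsigma R mul e S sigma w i i = (all inL w)%:R.
  rewrite /Tsigma diag_big_upper => [|k]; last first.
    exact: (Tsigma_factor_upper R monoidT RtrivT inj_e sorted_e _ k).
  rewrite -prod_natr_bool; apply: eq_bigr => k _.
  exact: Tsigma_factor_diag.
rewrite diag_prod; suff -> : all inL w = (loopset mul (e i) == loopset mul sigma).
  by case: eqP.
rewrite (perm_all _ perm_w); apply/allP/eqP => [inL_S | eq_L k]; last first.
  by rewrite /inL eq_L in_setI mem_enum => ->; rewrite andbT.
apply: (loopset_generators monoidT RtrivT genS); apply/setP => k.
rewrite !in_setI; case kS: (k \in S); rewrite ?andbF //= !andbT.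
have inL_k : inL k by apply: (inL_S k); rewrite mem_enum.
by move/eqP: inL_k; rewrite in_setI kS andbT => ->.
Qed.
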